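(* Every $F_{\sigma}$-ideal on $\omega$ is good.
   Context: An ideal on $\omega$ is $F_\sigma$ if it is an $F_\sigma$ subset of $2^\omega$ (via characteristic functions). For an ideal $\mathcal{J}$, $\mathcal{J}^+$ denotes the sets not in $\mathcal{J}$. $\mathcal{J}$ is called good if every uncountable family $\mathcal{F}\subseteq\mathcal{J}^{+}$ has a subfamily $\{B_{n}:n\in\omega\}\subseteq\mathcal{F}$ such that for every $f\in\omega^{\omega}$ there is a sequence $\{C_{n}:n\in\omega\}\subseteq\mathcal{J}$ with $C_{n}\subseteq B_{n}\setminus f(n)$ for every $n$ such that $\bigcup_{n}C_{n}\in\mathcal{J}^{+}$. *)

From HB Require Import structures.
From mathcomp Require Import all_boot all_order all_algebra.
From mathcomp Require Import all_classical all_reals all_analysis borel_hierarchy.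
Set Implicit Arguments.
Unset Strict Implicit.
Unset Printing Implicit Defensive.
Local Open Scope classical_set_scope.

Definition chi (A : set nat) : cantor_space := fun n => `[< A n >].

Definition is_ideal (J : set (set nat)) : Prop :=
  [/\ (forall A B : set nat, A `<=` B -> J B -> J A),
      (forall A B : set nat, J A -> J B -> J (A `|` B)),
      (forall A : set nat, finite_set A -> J A) &
      ~ J setT].

Definition Fsigma_ideal (J : set (set nat)) : Prop :=
  is_ideal J /\ Fsigma (chi @` J).

Definition Jplus (J : set (set nat)) : set (set nat) := ~` J.

(* good ideals; B \ f(n) = B minus {0,...,f(n)-1} = B `\` `I_(f n) *)
Definition good (J : set (set nat)) : Prop :=
  forall Fam : set (set nat), Fam `<=` Jplus J -> ~ countable Fam ->
  exists B : nat -> set nat,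
    injective B /\ (forall n, Fam (B n)) /\
    forall f : nat -> nat, exists C : nat -> set nat,
      (forall n, J (C n)) /\ (forall n, C n `<=` B n `\` `I_(f n)) /\
      Jplus J (\bigcup_n C n).

(* Write chi @` J as the union of closed sets K n. A set X n outside J has no
   superset in K n, so by compactness of the Cantor space already some finite
   piece X n ∩ [0, m n) has no superset in K n. The union of these finite pieces
   is then a superset of a piece outside every K n, hence it is not in J. The
   uncountability of the family is only needed to pick an injective sequence B
   from it; the argument is then applied to the sets B n \ f n. *)

From mathcomp Require Import all_boot all_order all_algebra.
From mathcomp Require Import all_classical all_reals all_analysis.
Set Implicit Arguments.
Unset Strict Implicit.
Unset Printing Implicit Defensive.

Local Open Scope classical_set_scope.

Lemma chiP (A : set nat) (i : nat) : reflect (A i) (chi A i).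
Proof. exact: asboolP. Qed.

Lemma closed_cantor_coord (i : nat) : closed [set a : cantor_space | a i].
Proof.
have /(@continuous_closedP cantor_space bool) := @proj_continuous nat (fun=> bool) i.
by apply; apply: discrete_closed.
Qed.

Lemma closed_cantor_supset (X : set nat) :
  closed [set a : cantor_space | X `<=` [set i | a i]].
Proof.
have -> : [set a : cantor_space | X `<=` [set i | a i]] =
    \bigcap_(i in X) [set a | a i] by apply/seteqP; split=> a.
by apply: closed_bigI => i _; apply: closed_cantor_coord.
Qed.

Lemma closed_supset_truncations (G : set cantor_space) (X : set nat) :
  closed G -> (forall m, exists2 a, G a & X `&` `I_m `<=` [set i | a i]) ->
  exists2 a, G a & X `<=` [set i | a i].
Proof.
move=> clG Gtrunc.
pose S m := G `&` [set a : cantor_space | X `&` `I_m `<=` [set i | a i]].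
have := cantor_space_compact; rewrite compact_In0 => /(_ nat setT S).
case.
- exists S => // m _; last by rewrite setTI.
  by apply: closedI => //; apply: closed_cantor_supset.
- move=> D _; pose M := (\max_(j <- finmap.enum_fset D) j)%N.
  have [a Ga aM] := Gtrunc M; exists a => j /= Dj; split=> // i [Xi ij].
  apply: aM; split=> //; apply: (leq_trans ij).
  exact: (@leq_bigmax_seq _ _ _ id j).
- move=> a Sa; exists a; first by case: (Sa 0%N I).
  by move=> i Xi; case: (Sa i.+1 I) => _; apply; split => /=.
Qed.

Lemma hereditary_sub_chi (J : set (set nat)) (a : cantor_space) (X : set nat) :
  (forall A B : set nat, A `<=` B -> J B -> J A) ->
  (chi @` J) a -> X `<=` [set i | a i] -> J X.
Proof. by move=> hered [A JA <-] XA; apply: (hered _ A) => // i /XA /chiP. Qed.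

Lemma Jplus_setD_finite (J : set (set nat)) (B F : set nat) :
  is_ideal J -> Jplus J B -> finite_set F -> Jplus J (B `\` F).
Proof.
move=> [hered unionJ finJ _] JB finF JBF; apply: JB.
apply: (hered _ ((B `\` F) `|` (B `&` F))).
  by move=> i Bi; have [Fi|nFi] := pselect (F i); [right|left].
by apply: unionJ => //; apply/finJ/finite_setIr.
Qed.

Lemma Fsigma_ideal_finite_selection (J : set (set nat)) (X : nat -> set nat) :
  Fsigma_ideal J -> (forall n, Jplus J (X n)) ->
  exists2 C : nat -> set nat, (forall n, finite_set (C n) /\ C n `<=` X n) &
    Jplus J (\bigcup_n C n).
Proof.
move=> [[hered _ _ _] [K clK chiJE]] XJ.
have Kuncovered n : exists m, forall a, K n a -> ~ (X n `&` `I_m `<=` [set i | a i]).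
  apply: contrapT => /forallNP Kcovers.
  have [a Ka Xa] : exists2 a, K n a & X n `<=` [set i | a i].
    apply: closed_supset_truncations => // m.
    by have /existsNP[a /not_implyP[Ka /contrapT Xa]] := Kcovers m; exists a.
  by apply: (XJ n); apply: (hereditary_sub_chi hered _ Xa); rewrite chiJE; exists n.
have [m Km] := choice Kuncovered.
exists (fun n => X n `&` `I_(m n)).
  by move=> n; split; [apply/finite_setIr/finite_II | apply: subIsetl].
move=> JU; have := imageP chi JU; rewrite chiJE => -[k _ Kk].
by apply: (Km k _ Kk) => i Xi; apply/chiP; exists k.
Qed.

Lemma infinite_set_injective_seq {T : pointedType} (A : set T) :
  infinite_set A -> exists2 B : nat -> T, injective B & forall n, A (B n).
Proof.
move=> /infiniteP/pcard_leP/injfunPex[B BA Binj].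
by exists B => [m n|n]; [apply: Binj; rewrite inE | apply: BA].
Qed.

Theorem mainTheorem17 (J : set (set nat)) : Fsigma_ideal J -> good J.
Proof.
move=> FsJ Fam FamJ Fam_uncountable.
have [B Binj FamB] : exists2 B : nat -> set nat, injective B & forall n, Fam (B n).
  apply: infinite_set_injective_seq => /finite_set_countable.
  exact: Fam_uncountable.
exists B; split=> //; split=> // f.
have BfJ n : Jplus J (B n `\` `I_(f n)).
  by apply: Jplus_setD_finite; [case: FsJ | apply: FamJ | apply: finite_II].
have [C CB CJ] := Fsigma_ideal_finite_selection FsJ BfJ.
exists C; split; last by split=> // n; case: (CB n).
by case: FsJ => -[_ _ finJ _] _ n; apply/finJ; case: (CB n).
Qed.
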